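(* With $\mathsf{S}_-(\mathsf{H},\zeta)$ and $\mathsf{S}_+(\mathsf{H},\zeta)$ the odd and even Hopf subalgebras, one has: (1) $\mathrm{S}(\mathrm{O}(V))\subseteq\mathsf{S}_-(\mathrm{S}(V),\zeta_{\mathrm{S}(V)})$ and $\mathrm{S}(\mathrm{E}(V))\subseteq\mathsf{S}_+(\mathrm{S}(V),\zeta_{\mathrm{S}(V)})$; (2) $\mathrm{T}(\mathrm{O}(V))\subseteq\mathsf{S}_-(\mathrm{T}(V),\zeta_{\mathrm{T}(V)})$ and $\mathrm{T}(\mathrm{E}(V))\subseteq\mathsf{S}_+(\mathrm{T}(V),\zeta_{\mathrm{T}(V)})$; (3) $\mathrm{Sym}(\mathrm{O}(V))\subseteq\mathsf{S}_-(\mathrm{Sym}(V),\zeta_{\mathrm{Sym}(V)})$ and $\mathrm{Sym}(\mathrm{E}(V))\subseteq\mathsf{S}_+(\mathrm{Sym}(V),\zeta_{\mathrm{Sym}(V)})$.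
   Context: For a combinatorial Hopf algebra $(\mathsf{H},\zeta)$ ($\mathsf{H}$ graded connected, $\zeta$ a character), $\bar\zeta|_{\mathsf{H}_n}=(-1)^n\zeta|_{\mathsf{H}_n}$, $\zeta^{-1}=\zeta\circ\mathcal{S}$, and $\mathsf{S}_-(\mathsf{H},\zeta)$ (resp. $\mathsf{S}_+$) is the largest subcoalgebra in $\ker(\overline{\zeta^{-1}}-\zeta)$ (resp. $\ker(\bar\zeta-\zeta)$). $V$ is a graded vector space with homogeneous basis $\{v_i\}$. $\mathrm{S}(V)$ is the shuffle algebra on words $v_\alpha$ (product: sum over all shuffles of the two words, i.e. interleavings preserving order within each; coproduct: deconcatenation), with character $\zeta_{\mathrm{S}(V)}=\zeta_{\mathrm{QSym}}\circ\Phi_{\mathrm{S}(V)}$ where $\Phi_{\mathrm{S}(V)}(v_\alpha)=S_{(\deg v_{\alpha_1},\dots,\deg v_{\alpha_\ell})}$ (shuffle basis of $\mathrm{QSym}$) and $\zeta_{\mathrm{QSym}}(f)=f(1,0,0,\dots)$. $\mathrm{T}(V)$ is the tensor algebra (concatenation product, $v_i$ primitive) with character $\zeta_{\mathrm{T}(V)}(v_i)=1/\deg(v_i)$ extended multiplicatively; $\mathrm{Sym}(V)=\mathrm{T}(V)/\langle v_iv_j-v_jv_i\rangle$ with induced character $\zeta_{\mathrm{Sym}(V)}(\overline{v_i})=1/\deg(v_i)$. $\mathrm{S}(\mathrm{O}(V))$, $\mathrm{T}(\mathrm{O}(V))$, $\mathrm{Sym}(\mathrm{O}(V))$ (resp.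 with $\mathrm{E}$) are spanned by the words (classes) all of whose letters have odd (resp. even) degree. *)

From HB Require Import structures.
From mathcomp Require Import all_boot all_order all_algebra.
From mathcomp Require Import finmap multiset.
From mathcomp.multinomials Require Import monalg.

Set Implicit Arguments.
Unset Strict Implicit.
Unset Printing Implicit Defensive.

Import GRing.Theory.
Local Open Scope ring_scope.

(* A coalgebra is presented as the free
   vector space {malg F[B]} on a basis B (finitely supported functions
   B -> F), with coproduct given on basis elements by
   cop b = list (with multiplicity) of the pairs (b1,b2) such that
   Delta b = \sum b1 (x) b2.  The tensor square is {malg F[(B * B)%type]}.     *)
Section BasedCoalgebra.
Variables (F : fieldType) (B : choiceType) (cop : B -> seq (B * B)).

Definition Delta (x : {malg F[B]}) : {malg F[(B * B)%type]} :=
  \sum_(b <- msupp x) x@_b *: \sum_(p <- cop b) << p >>.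

Definition tens (x y : {malg F[B]}) : {malg F[(B * B)%type]} :=
  \sum_(b <- msupp x) \sum_(c <- msupp y) << x@_b * y@_c *g (b, c) >>.

Definition is_subspace (D : {malg F[B]} -> Prop) :=
  D 0 /\ forall (a : F) x y, D x -> D y -> D (a *: x + y).

Definition is_subcoalgebra (D : {malg F[B]} -> Prop) :=
  is_subspace D /\
  forall x, D x -> exists s : seq ({malg F[B]} * {malg F[B]}),
    (forall p, p \in s -> D p.1 /\ D p.2) /\
    Delta x = \sum_(p <- s) tens p.1 p.2.

(* x belongs to the largest subcoalgebra contained in K (= the sum of
   all subcoalgebras contained in K, itself such a subcoalgebra) *)
Definition in_largest_subcoalg (K : {malg F[B]} -> Prop) (x : {malg F[B]}) :=
  exists D, is_subcoalgebra D /\ (forall y, D y -> K y) /\ D x.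

(* linear functionals, given by their values on the basis *)
Definition lin (phi : B -> F) (x : {malg F[B]}) : F :=
  \sum_(b <- msupp x) x@_b * phi b.

Definition conv (f g : B -> F) (b : B) : F :=
  \sum_(p <- cop b) f p.1 * g p.2.

Definition is_conv_inverse (eps zeta g : B -> F) :=
  (forall b, conv g zeta b = eps b) /\ (forall b, conv zeta g b = eps b).

Definition barf (deg : B -> nat) (phi : B -> F) (b : B) : F :=
  (-1) ^+ deg b * phi b.

Definition in_S_minus (deg : B -> nat) (zeta zinv : B -> F) :=
  in_largest_subcoalg (fun y => lin (barf deg zinv) y = lin zeta y).

Definition in_S_plus (deg : B -> nat) (zeta : B -> F) :=
  in_largest_subcoalg (fun y => lin (barf deg zeta) y = lin zeta y).

End BasedCoalgebra.

Fixpoint bitseqs (n : nat) : seq bitseq :=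
  if n is n'.+1 then [seq b :: s | b <- [:: true; false], s <- bitseqs n']
  else [:: [::]].

(* Words in the letters I (basis of V), deg : I -> nat.               *)
Section Words.
Variables (F : fieldType) (I : choiceType) (deg : I -> nat).

Definition wdeg (w : seq I) : nat := sumn (map deg w).

(* deconcatenation coproduct (shuffle algebra S(V)) *)
Definition cop_deconc (w : seq I) : seq (seq I * seq I) :=
  [seq (take k w, drop k w) | k <- iota 0 (size w).+1].

(* unshuffle coproduct (tensor algebra T(V), letters primitive) *)
Definition cop_unsh (w : seq I) : seq (seq I * seq I) :=
  [seq (mask m w, mask (map negb m) w) | m <- bitseqs (size w)].

Definition eps_word (w : seq I) : F := (w == [::])%:R.

Definition odd_word (w : seq I) := all (fun i => odd (deg i)) w.
Definition even_word (w : seq I) := all (fun i => ~~ odd (deg i)) w.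

Definition zeta_T (w : seq I) : F := \prod_(i <- w) (deg i)%:R^-1.

End Words.

(* QSym, in the monomial basis M_beta (beta a composition, seq nat).   *)
Section QSym.
Variable F : fieldType.

(* M_beta evaluated at (xs_1, xs_2, ..., xs_n, 0, 0, ...) *)
Fixpoint Mev (xs : seq F) (beta : seq nat) : F :=
  match beta with
  | [::] => 1
  | b :: bs => match xs with
               | [::] => 0
               | x :: xs' => x ^+ b * Mev xs' bs + Mev xs' beta
               end
  end.

Definition zeta_QSym (f : {malg F[seq nat]}) : F :=
  \sum_(beta <- msupp f) f@_beta * Mev [:: 1] beta.

(* all decompositions of a sequence into consecutive nonempty blocks *)
Fixpoint blocks (s : seq nat) : seq (seq (seq nat)) :=
  match s with
  | [::] => [:: [::]]
  | a :: s' => [seq [:: a] :: Bl | Bl <- blocks s'] ++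
               [seq (a :: head [::] Bl) :: behead Bl | Bl <- blocks s' & Bl != [::]]
  end.

(* shuffle basis of QSym (Hoffman's exponential):
   S_alpha = \sum_{I |= l(alpha)} (1/I!) M_{I[alpha]} *)
Definition shuffleS (alpha : seq nat) : {malg F[seq nat]} :=
  \sum_(Bl <- blocks alpha)
     << (\prod_(blk <- Bl) ((size blk)`!)%:R^-1) *g map sumn Bl >>.

End QSym.

(* zeta_S(V) = zeta_QSym o Phi_S(V), Phi(v_alpha) = S_(deg alpha_1,...) *)
Definition zeta_S (F : fieldType) (I : choiceType) (deg : I -> nat)
  (w : seq I) : F := zeta_QSym (shuffleS F (map deg w)).

(* Sym(V): basis = commutative monomials = multisets of letters.       *)
Section SymV.
Local Open Scope mset_scope.
Variables (F : fieldType) (I : choiceType) (deg : I -> nat).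

Definition msetdeg (m : {mset I}) : nat := sumn (map deg (enum_mset m)).

(* coproduct induced from T(V) (letters primitive) *)
Definition cop_sym (m : {mset I}) : seq ({mset I} * {mset I}) :=
  [seq (seq_mset (mask b (enum_mset m)),
        seq_mset (mask (map negb b) (enum_mset m))) | b <- bitseqs (size (enum_mset m))].

Definition eps_mon (m : {mset I}) : F := (m == mset0)%:R.

Definition odd_mon (m : {mset I}) := all (fun i => odd (deg i)) (enum_mset m).
Definition even_mon (m : {mset I}) := all (fun i => ~~ odd (deg i)) (enum_mset m).

Definition zeta_Sym (m : {mset I}) : F :=
  (\prod_(i <- enum_mset m) (deg i)%:R^-1)%R.

End SymV.

From HB Require Import structures.
From mathcomp Require Import all_boot all_order all_algebra.
From mathcomp Require Import finmap multiset.
From mathcomp.multinomials Require Import monalg.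
From mathcomp.algebra_tactics Require Import ring.

(* The words (monomials) all of whose letters are odd, resp. even, span a
   subcoalgebra in each of the three bialgebras, so it suffices to compare the
   two characters on these basis elements.  On even ones [bar zeta = zeta]
   because the degree is even.  On odd ones we use that [zeta^-1] is the unique
   right convolution inverse of [zeta] (the coproduct is triangular), so it
   suffices to see that [bar zeta] is a right inverse there.  For T(V) and
   Sym(V) the sum over unshuffles factors letterwise into
   [1/d + (-1)^d/d = 0].  For S(V), [M_beta(1,0,...)] vanishes unless [beta]
   has at most one part, whence [zeta(w) = 1/|w|!], and the sum over
   deconcatenations is [sum_k (-1)^(n-k)/(k! (n-k)!) = 0] for [n > 0]; this
   is where characteristic 0 is used. *)

Set Implicit Arguments.
Unset Strict Implicit.
Unset Printing Implicit Defensive.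

Import GRing.Theory.
Local Open Scope ring_scope.

Section BasedCoalgebra.
Variables (F : fieldType) (B : choiceType) (cop : B -> seq (B * B)).

Definition supported_in (Q : pred B) (x : {malg F[B]}) : Prop :=
  forall b, b \in msupp x -> Q b.

Definition cop_closed (Q : pred B) : Prop :=
  forall b p, Q b -> p \in cop b -> Q p.1 /\ Q p.2.

Lemma supported_in_subspace (Q : pred B) : is_subspace (supported_in Q).
Proof.
split=> [b|a x y Qx Qy b]; first by rewrite msupp0.
move/(fsubsetP (msuppD_le _ _)); rewrite in_fsetU => /orP[|/Qy //].
by move/(fsubsetP (msuppZ_le _ _))/Qx.
Qed.

Lemma malgZU (K : choiceType) (c : F) (k : K) :
  << c *g k >> = c *: (<< k >> : {malg F[K]}).
Proof. by apply/malgP => l; rewrite mcoeffZ !mcoeffU mulr_natr. Qed.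

Lemma msuppU1 (k : B) : msupp (<< k >> : {malg F[B]}) = [fset k]%fset.
Proof. by rewrite msuppU oner_eq0. Qed.

Lemma tensZU (c : F) (u v : B) : tens (c *: << u >>) << v >> = c *: << (u, v) >>.
Proof.
rewrite /tens msuppZ !msuppU1; have [->|_] := eqVneq c 0.
  by rewrite big_seq_fset0 scale0r.
by rewrite !big_seq_fset1 mcoeffZ !mcoeffU !eqxx !mulr1 malgZU.
Qed.

Lemma supported_inZU (Q : pred B) (c : F) u : Q u -> supported_in Q (c *: << u >>).
Proof.
move=> Qu b /(fsubsetP (msuppZ_le _ _)).
by rewrite msuppU1 inE => /eqP ->.
Qed.

Lemma supported_in_subcoalgebra (Q : pred B) :
  cop_closed Q -> is_subcoalgebra cop (supported_in Q).
Proof.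
move=> closedQ; split=> [|x Qx]; first exact: supported_in_subspace.
exists [seq (x@_b *: << p.1 >>, 1 *: << p.2 >>) | b <- msupp x, p <- cop b].
split.
  move=> q /allpairsPdep[b [p [bx pb ->]]].
  by have [Qp1 Qp2] := closedQ b p (Qx b bx) pb; split; apply: supported_inZU.
rewrite big_allpairs_dep /Delta; apply: eq_bigr => b _.
by rewrite scaler_sumr; apply: eq_bigr => -[u v] _; rewrite scale1r tensZU.
Qed.

Lemma in_largest_subcoalg_supported (Q : pred B) (phi psi : B -> F) x :
  cop_closed Q -> {in Q, phi =1 psi} -> supported_in Q x ->
  in_largest_subcoalg cop (fun y => lin phi y = lin psi y) x.
Proof.
move=> closedQ eq_phi Qx; exists (supported_in Q).
split; first exact: supported_in_subcoalgebra.
by split=> // y Qy; apply: eq_big_seq => b /Qy Qb; rewrite eq_phi.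
Qed.

Variable deg : B -> nat.

Lemma in_S_plus_supported (Q : pred B) (zeta : B -> F) x :
  cop_closed Q -> {in Q, forall b, ~~ odd (deg b)} -> supported_in Q x ->
  in_S_plus cop deg zeta x.
Proof.
move=> closedQ evenQ; apply: in_largest_subcoalg_supported => // b Qb.
by rewrite /barf -signr_odd (negbTE (evenQ b Qb)) mul1r.
Qed.

(* The connectedness of the coproduct in the form the argument needs:
   [Delta b = e (x) b + terms whose right factor is smaller than [b]]. *)
Definition cop_triangular (e : B) (sz : B -> nat) : Prop :=
  forall b, exists s,
    perm_eq (cop b) ((e, b) :: s) /\ forall p, p \in s -> (sz p.2 < sz b)%N.

Section ConvInverse.
Variables (eps zeta : B -> F) (Q : pred B) (e : B) (sz : B -> nat).
Hypotheses (closedQ : cop_closed Q) (zeta_e : zeta e = 1)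
  (triangular : cop_triangular e sz).

Lemma conv_right_inverse_uniq_on g1 g2 :
  {in Q, conv cop zeta g1 =1 eps} -> {in Q, conv cop zeta g2 =1 eps} ->
  {in Q, g1 =1 g2}.
Proof.
move=> inv1 inv2 b; have [n] := ubnP (sz b).
elim: n b => // n IH b /ltnSE sz_b Qb.
have [s [perm_cop sz_s]] := triangular b.
have IHs : {in s, forall p, g1 p.2 = g2 p.2}.
  move=> p sp; have [_ Qp2] : Q p.1 /\ Q p.2.
    by apply: closedQ Qb _; rewrite (perm_mem perm_cop) inE sp orbT.
  by apply: IH Qp2; apply: leq_trans (sz_s p sp) _.
have := etrans (inv1 b Qb) (esym (inv2 b Qb)).
rewrite /conv !(perm_big _ perm_cop) !big_cons /= zeta_e !mul1r.
by rewrite (eq_big_seq _ (fun p sp => congr1 _ (IHs p sp))) => /addIr.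
Qed.

Lemma in_S_minus_supported zinv x :
  {in Q, conv cop zeta (barf deg zeta) =1 eps} ->
  is_conv_inverse cop eps zeta zinv -> supported_in Q x ->
  in_S_minus cop deg zeta zinv x.
Proof.
move=> bar_inv [_ zinv_inv]; apply: in_largest_subcoalg_supported => // b Qb.
have zinvE := conv_right_inverse_uniq_on (fun c _ => zinv_inv c) bar_inv Qb.
by rewrite /barf zinvE signrMK.
Qed.

End ConvInverse.

End BasedCoalgebra.

Lemma bitseqs_cons n :
  bitseqs n.+1 = [seq true :: m | m <- bitseqs n] ++ [seq false :: m | m <- bitseqs n].
Proof. by rewrite /= cats0. Qed.

Lemma size_bitseqs n m : m \in bitseqs n -> size m = n.
Proof.
elim: n m => [|n IH] m; first by rewrite inE => /eqP ->.
by rewrite bitseqs_cons mem_cat => /orP[] /mapP[m' /IH <- ->].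
Qed.

Lemma bitseqs_rcons_false n : exists X,
  bitseqs n = rcons X (nseq n false) /\ forall m, m \in X -> true \in m.
Proof.
elim: n => [|n [X [bitsE X_true]]]; first by exists [::].
exists ([seq true :: m | m <- bitseqs n] ++ [seq false :: m | m <- X]); split.
  by rewrite bitseqs_cons {2}bitsE map_rcons rcons_cat.
move=> bits; rewrite mem_cat => /orP[] /mapP[m mX ->]; first by rewrite inE eqxx.
by rewrite inE X_true.
Qed.

Lemma sum_mask_prod (R : comPzRingType) (T : Type) (f g : T -> R) (w : seq T) :
  \sum_(m <- bitseqs (size w))
     (\prod_(i <- mask m w) f i) * (\prod_(i <- mask (map negb m) w) g i)
  = \prod_(i <- w) (f i + g i).
Proof.
elim: w => [|a w IH]; first by rewrite big_seq1 !big_nil mulr1.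
rewrite [size _]/= bitseqs_cons big_cat !big_map big_cons mulrDl -IH !big_distrr /=.
by congr (_ + _); apply: eq_bigr => m _; rewrite big_cons;
  [rewrite mulrA | rewrite mulrCA].
Qed.

Section Words.
Variables (F : fieldType) (I : choiceType).

Lemma all_cop_deconc (P : pred I) : cop_closed (@cop_deconc I) (all P).
Proof.
move=> w p Pw /mapP[k _ ->] /=.
by move: Pw; rewrite -{1}(cat_take_drop k w) all_cat => /andP.
Qed.

Lemma all_cop_unsh (P : pred I) : cop_closed (@cop_unsh I) (all P).
Proof. by move=> w p Pw /mapP[m _ ->]; split; apply: all_mask. Qed.

Lemma cop_deconc_triangular : cop_triangular (@cop_deconc I) [::] size.
Proof.
move=> w.
exists [seq (take k w, drop k w) | k <- iota 1 (size w)].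
split; first by rewrite /cop_deconc /= take0 drop0.
move=> p /mapP[k]; rewrite mem_iota add1n ltnS => /andP[k_gt0 k_le] ->.
by rewrite size_drop ltn_subrL k_gt0 (leq_trans k_gt0 k_le).
Qed.

Lemma cop_unsh_triangular : cop_triangular (@cop_unsh I) [::] size.
Proof.
move=> w.
have [X [bitsE X_true]] := bitseqs_rcons_false (size w).
exists [seq (mask m w, mask (map negb m) w) | m <- X]; split.
  rewrite /cop_unsh bitsE map_rcons mask_false map_nseq mask_true //.
  by rewrite perm_rcons.
move=> p /mapP[m mX ->] /=.
have size_m : size m = size w by apply: size_bitseqs; rewrite bitsE mem_rcons inE mX orbT.
rewrite size_mask ?size_map // count_map -size_m -(count_predC id m).
rewrite -[X in (X < _)%N]add0n ltn_add2r -has_count.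
by apply/hasP; exists true; first exact: X_true.
Qed.

Variable deg : I -> nat.

Lemma sign_wdeg (R : pzRingType) (w : seq I) :
  (-1) ^+ wdeg deg w = \prod_(i <- w) (-1) ^+ deg i :> R.
Proof. by elim: w => [|a w IH]; rewrite ?big_nil // big_cons exprD IH. Qed.

Lemma even_word_wdeg (w : seq I) : even_word deg w -> ~~ odd (wdeg deg w).
Proof.
elim: w => //= a w IH /andP[even_a /IH].
by rewrite /wdeg /= oddD => /negbTE ->; rewrite addbF.
Qed.

Lemma odd_word_sign (R : pzRingType) (w : seq I) :
  odd_word deg w -> (-1) ^+ wdeg deg w = (-1) ^+ size w :> R.
Proof.
rewrite sign_wdeg; elim: w => [|a w IH] /=; first by rewrite big_nil.
by move=> /andP[odd_a /IH ih]; rewrite big_cons ih -(signr_odd _ (deg a)) odd_a exprS.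
Qed.

Lemma barf_zeta_T (w : seq I) :
  barf (wdeg deg) (zeta_T F deg) w = \prod_(i <- w) ((-1) ^+ deg i * (deg i)%:R^-1).
Proof. by rewrite /barf sign_wdeg big_split. Qed.

Lemma conv_unsh_zeta_T (w : seq I) : odd_word deg w ->
  conv (@cop_unsh I) (zeta_T F deg) (barf (wdeg deg) (zeta_T F deg)) w = eps_word F w.
Proof.
rewrite /conv /cop_unsh big_map.
under eq_bigr do rewrite /= barf_zeta_T.
rewrite sum_mask_prod; case: w => [|a w] /=; first by rewrite big_nil.
by case/andP=> odd_a _; rewrite big_cons -signr_odd odd_a mulN1r subrr mul0r.
Qed.

End Words.

Lemma blocks_size_le1 (s : seq nat) :
  [seq Bl <- blocks s | (size Bl <= 1)%N] = if s is [::] then [:: [::]] else [:: [:: s]].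
Proof.
elim: s => [//|a s IH] /=.
have blocks_small (P : pred (seq (seq nat))) : (forall Bl, P Bl -> size Bl <= 1)%N ->
    filter P (blocks s) = filter P (if s is [::] then [:: [::]] else [:: [:: s]]).
  move=> P_small; rewrite -IH -filter_predI; apply: eq_filter => Bl /=.
  by case P_Bl: (P Bl) => //=; rewrite P_small.
rewrite filter_cat !filter_map -filter_predI !blocks_small /=.
- by case: s {IH blocks_small}.
- by move=> [|? [|]].
- by move=> Bl; rewrite /= ltnS leqn0 => /eqP ->.
Qed.

Lemma Mev_1 (F : fieldType) (beta : seq nat) :
  Mev [:: (1 : F)] beta = (size beta <= 1)%N%:R.
Proof. by case: beta => [|b [|c bs]] //=; rewrite ?expr1n ?mulr1 ?mulr0 addr0. Qed.

Lemma zeta_QSym_sumU (F : fieldType) (T : Type) (s : seq T)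
    (c : T -> F) (k : T -> seq nat) :
  zeta_QSym (\sum_(x <- s) << c x *g k x >>) = \sum_(x <- s) c x * Mev [:: 1] (k x).
Proof.
have -> : @zeta_QSym F =1 mmap (@idfun F) (Mev [:: 1]) by [].
by rewrite raddf_sum; apply: eq_bigr => x _; exact: mmapU.
Qed.

Lemma zeta_S_fact (F : fieldType) (I : choiceType) (deg : I -> nat) (w : seq I) :
  zeta_S F deg w = ((size w)`!)%:R^-1.
Proof.
rewrite /zeta_S /shuffleS zeta_QSym_sumU.
under eq_bigr do rewrite Mev_1 size_map mulr_natr mulrb.
rewrite -big_mkcondr -big_filter blocks_size_le1 -(size_map deg w).
by case: (map deg w) => [|a s]; rewrite !big_seq1 ?big_nil ?invr1.
Qed.

(* the coefficient of [x^n] in [exp(x) exp(-x) = 1] *)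
Lemma sum_inv_fact_sign (F : fieldType) (n : nat) : [pchar F] =i pred0 ->
  \sum_(k <- iota 0 n.+1) (k`!)%:R^-1 * ((-1) ^+ (n - k) * ((n - k)`!)%:R^-1)
  = (n == 0)%:R :> F.
Proof.
move=> /pcharf0P char0.
have fact_neq0 m : (m`!)%:R != 0 :> F by rewrite char0 -lt0n fact_gt0.
have -> : (n == 0)%:R = (n`!)%:R^-1 * (-1 + 1 : F) ^+ n.
  by rewrite addNr expr0n; case: n => [|n]; rewrite ?fact0 ?invr1 ?mul1r ?mulr0.
rewrite -[iota 0 _]/(index_iota 0 n.+1) big_mkord exprDn mulr_sumr.
apply: eq_bigr => -[k /=]; rewrite ltnS => le_kn _.
rewrite expr1n mulr1 -mulr_natr -(bin_fact le_kn) !natrM.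
by field; rewrite !fact_neq0 char0 -lt0n bin_gt0 le_kn.
Qed.

Lemma conv_deconc_zeta_S (F : fieldType) (I : choiceType) (deg : I -> nat) (w : seq I) :
  [pchar F] =i pred0 -> odd_word deg w ->
  conv (@cop_deconc I) (zeta_S F deg) (barf (wdeg deg) (zeta_S F deg)) w = eps_word F w.
Proof.
move=> char0 odd_w; rewrite /conv /cop_deconc big_map /eps_word -size_eq0.
rewrite -(sum_inv_fact_sign _ char0); apply: eq_big_seq => k.
rewrite mem_iota add0n ltnS /= => le_k.
have odd_drop : odd_word deg (drop k w).
  have k_in : (take k w, drop k w) \in cop_deconc w.
    by apply: map_f; rewrite mem_iota ltnS.
  exact: (all_cop_deconc odd_w k_in).2.
by rewrite /barf !zeta_S_fact odd_word_sign // size_drop size_takel.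
Qed.

Section SymmetricAlgebra.
Local Open Scope mset_scope.
Variables (F : fieldType) (I : choiceType) (deg : I -> nat).

Lemma cop_symE (m : {mset I}) :
  cop_sym m = [seq (seq_mset p.1, seq_mset p.2) | p <- cop_unsh (enum_mset m)].
Proof. by rewrite /cop_sym /cop_unsh -map_comp. Qed.

Lemma all_enum_seq_mset (P : pred I) (s : seq I) : all P (seq_mset s) = all P s.
Proof. exact/perm_all/perm_eq_seq_mset. Qed.

Lemma size_enum_seq_mset (s : seq I) : size (seq_mset s) = size s.
Proof. exact/perm_size/perm_eq_seq_mset. Qed.

Lemma zeta_Sym_seq_mset (s : seq I) : zeta_Sym F deg (seq_mset s) = zeta_T F deg s.
Proof. exact/perm_big/perm_eq_seq_mset. Qed.

Lemma msetdeg_seq_mset (s : seq I) : msetdeg deg (seq_mset s) = wdeg deg s.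
Proof. by rewrite /msetdeg /wdeg !sumn_map; apply/perm_big/perm_eq_seq_mset. Qed.

Lemma eps_mon_enum (m : {mset I}) : eps_mon F m = eps_word F (enum_mset m).
Proof. by rewrite /eps_mon /eps_word -size_mset_eq0 size_eq0. Qed.

Lemma all_cop_sym (P : pred I) : cop_closed (@cop_sym I) (fun m => all P (enum_mset m)).
Proof.
move=> m q Pm; rewrite cop_symE => /mapP[p p_in ->] /=.
by rewrite !all_enum_seq_mset; apply: all_cop_unsh p_in.
Qed.

Lemma cop_sym_triangular :
  cop_triangular (@cop_sym I) mset0 (fun m => size (enum_mset m)).
Proof.
move=> m; have [s [perm_cop size_s]] := cop_unsh_triangular (enum_mset m).
exists [seq (seq_mset p.1, seq_mset p.2) | p <- s]; split.
  have -> : (mset0, m) = (seq_mset [::], seq_mset (enum_mset m)) :> {mset I} * {mset I}.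
    rewrite seq_mset_id; congr (_, _); apply/eqP.
    by rewrite eq_sym -size_mset_eq0 size_enum_seq_mset.
  rewrite cop_symE.
  exact: (perm_map (fun p => (seq_mset p.1, seq_mset p.2)) perm_cop).
by move=> q /mapP[p p_in ->]; rewrite size_enum_seq_mset size_s.
Qed.

Lemma conv_sym_zeta_Sym (m : {mset I}) : odd_mon deg m ->
  conv (@cop_sym I) (zeta_Sym F deg) (barf (msetdeg deg) (zeta_Sym F deg)) m
  = eps_mon F m.
Proof.
move=> odd_m; rewrite eps_mon_enum -(conv_unsh_zeta_T F odd_m) /conv cop_symE big_map.
by apply: eq_bigr => p _; rewrite /barf !zeta_Sym_seq_mset msetdeg_seq_mset.
Qed.

End SymmetricAlgebra.

Theorem mainTheorem10 (F : fieldType) (I : choiceType) (deg : I -> nat) :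
  [pchar F] =i pred0 ->
  (forall i, (0 < deg i)%N) ->
  (* (1) shuffle algebra S(V) *)
  (forall zinv : seq I -> F,
     is_conv_inverse (@cop_deconc I) (@eps_word F I) (zeta_S F deg) zinv ->
     forall x : {malg F[seq I]}, (forall w, w \in msupp x -> odd_word deg w) ->
       in_S_minus (@cop_deconc I) (wdeg deg) (zeta_S F deg) zinv x) /\
  (forall x : {malg F[seq I]}, (forall w, w \in msupp x -> even_word deg w) ->
       in_S_plus (@cop_deconc I) (wdeg deg) (zeta_S F deg) x) /\
  (* (2) tensor algebra T(V) *)
  (forall zinv : seq I -> F,
     is_conv_inverse (@cop_unsh I) (@eps_word F I) (zeta_T F deg) zinv ->
     forall x : {malg F[seq I]}, (forall w, w \in msupp x -> odd_word deg w) ->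
       in_S_minus (@cop_unsh I) (wdeg deg) (zeta_T F deg) zinv x) /\
  (forall x : {malg F[seq I]}, (forall w, w \in msupp x -> even_word deg w) ->
       in_S_plus (@cop_unsh I) (wdeg deg) (zeta_T F deg) x) /\
  (* (3) symmetric algebra Sym(V) *)
  (forall zinv : (multiset I) -> F,
     is_conv_inverse (@cop_sym I) (@eps_mon F I) (zeta_Sym F deg) zinv ->
     forall x : {malg F[(multiset I)]}, (forall m, m \in msupp x -> odd_mon deg m) ->
       in_S_minus (@cop_sym I) (msetdeg deg) (zeta_Sym F deg) zinv x) /\
  (forall x : {malg F[(multiset I)]}, (forall m, m \in msupp x -> even_mon deg m) ->
       in_S_plus (@cop_sym I) (msetdeg deg) (zeta_Sym F deg) x).
Proof.
move=> char0 _.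
split.
  move=> zinv zinvP x.
  apply: (in_S_minus_supported (e := [::]) (sz := size) _ _ _ _ zinvP).
  - exact: all_cop_deconc.
  - by rewrite zeta_S_fact invr1.
  - exact: cop_deconc_triangular.
  - by move=> w; apply: conv_deconc_zeta_S.
split.
  move=> x; apply: in_S_plus_supported; first exact: all_cop_deconc.
  by move=> w; apply: even_word_wdeg.
split.
  move=> zinv zinvP x.
  apply: (in_S_minus_supported (e := [::]) (sz := size) _ _ _ _ zinvP).
  - exact: all_cop_unsh.
  - by rewrite /zeta_T big_nil.
  - exact: cop_unsh_triangular.
  - by move=> w; apply: conv_unsh_zeta_T.
split.
  move=> x; apply: in_S_plus_supported; first exact: all_cop_unsh.
  by move=> w; apply: even_word_wdeg.
split.
  move=> zinv zinvP x.
  apply: (in_S_minus_supported (e := mset0) (sz := fun m => size (enum_mset m))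
           _ _ _ _ zinvP).
  - exact: all_cop_sym.
  - by rewrite /zeta_Sym enum_mset0 big_nil.
  - exact: cop_sym_triangular.
  - by move=> m; apply: conv_sym_zeta_Sym.
move=> x; apply: in_S_plus_supported; first exact: all_cop_sym.
by move=> m; apply: even_word_wdeg.
Qed.
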